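(* Let $F$ be a distribution on $[0,\infty)$ with unbounded support and let $\gamma\ge0$ satisfy $\varphi(\gamma)<\infty$. Let $G(du)=e^{\gamma u}F(du)/\varphi(\gamma)$. Then $$\liminf_{x\to\infty}\frac{\overline{G*G}(x)}{\overline{G}(x)}\ge\frac{1}{\varphi(\gamma)}\liminf_{x\to\infty}\frac{\overline{F*F}(x)}{\overline{F}(x)}$$ and $$\limsup_{x\to\infty}\frac{\overline{G*G}(x)}{\overline{G}(x)}\le\frac{1}{\varphi(\gamma)}\limsup_{x\to\infty}\frac{\overline{F*F}(x)}{\overline{F}(x)}.$$
   Context: $\overline{F}(x)=F(x,\infty)$ is the tail of $F$; $\varphi(\gamma)=\int_0^\infty e^{\gamma x}F(dx)$. *)

From HB Require Import structures.
From mathcomp Require Import all_boot all_order all_algebra.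
From mathcomp Require Import all_classical all_reals all_analysis.
Set Implicit Arguments. Unset Strict Implicit. Unset Printing Implicit Defensive.
Import Order.TTheory GRing.Theory Num.Theory.
Import numFieldNormedType.Exports.
Local Open Scope classical_set_scope.
Local Open Scope ring_scope.

Definition tail (R : realType) (F : probability (measurableTypeR R) R) (x : R)
  : \bar R := F `]x, +oo[%classic.

(* tail of the convolution F*G at x: (F (x) G){(u,v) | u + v > x}, i.e. the
   law of the sum of two independent variables with laws F and G. *)
Definition conv_tail (R : realType) (F G : probability (measurableTypeR R) R)
  (x : R) : \bar R := (F \x G)%E [set p | x < p.1 + p.2].

Definition mgf (R : realType) (F : probability (measurableTypeR R) R) (g : R)
  : \bar R := (\int[F]_(x in `[0%R, +oo[%classic) (expR (g * x))%:E)%E.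

Definition conv_ratio (R : realType) (F : probability (measurableTypeR R) R)
  (x : R) : \bar R := (fine (conv_tail F F x) / fine (tail F x))%:E.

From HB Require Import structures.
From mathcomp Require Import all_boot all_order all_algebra.
From mathcomp Require Import all_classical all_reals all_analysis.
From mathcomp Require Import measurable_realfun ring.
Import Order.TTheory GRing.Theory Num.Theory.
Import numFieldNormedType.Exports.
Set Implicit Arguments. Unset Strict Implicit. Unset Printing Implicit Defensive.
Local Open Scope classical_set_scope.
Local Open Scope ring_scope.

(* Write J(mu, h, x) = int_{h > x} e^{gamma h} dmu.  The tilted tails are
   tail G = J(F, id) / phi(gamma) and tail (G * G) = J(F (x) F, +) / phi(gamma)^2,
   so the ratio for G is J(F (x) F, +) / J(F, id) scaled by 1 / phi(gamma).
   Since gamma >= 0, every superlevel set {s | y < 1_{s > x} e^{gamma s}} is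
   empty or a ray (m, oo) with m >= x, so by the layer-cake formula a bound
   c tail F(t) <= tail (F * F)(t) for all t >= x integrates to
   c J(F, id)(x) <= J(F (x) F, +)(x), and symmetrically for upper bounds.
   Eventual bounds on the ratio for F thus pass to the ratio for G. *)

Lemma measurable_set_bool d (T : measurableType d) (b : T -> bool) :
  measurable_fun setT b -> measurable [set x | b x].
Proof. by move=> mb; rewrite -(setTI [set x | b x]); exact: mb measurableT [set true] I. Qed.

Lemma fin_num_pmulE (R : realType) (k : R) (e : \bar R) : 0 < k ->
  (k%:E * e \is a fin_num)%E = (e \is a fin_num).
Proof. by move=> k_gt0; case: e => //= [|]; rewrite ?gt0_muley ?gt0_muleNy. Qed.

Lemma lee_EFinM_fine (R : realType) (a b : R) (x y : \bar R) :
  x \is a fin_num -> y \is a fin_num ->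
  (a%:E * x <= b%:E * y)%E = (a * fine x <= b * fine y).
Proof. by move: x y => [x| |] [y| |]. Qed.

Lemma probability_fin_num d (T : measurableType d) (R : realType)
    (P : probability T R) (A : set T) :
  measurable A -> P A \is a fin_num.
Proof. by move=> mA; rewrite ge0_fin_numE // (le_lt_trans (probability_le1 P mA)) ?ltey. Qed.

Section limf_pscale.
Local Open Scope ereal_scope.
Context (U : choiceType) (T : filteredType U) (R : realType) (F : set_system T)
  {FF : Filter F}.
Implicit Types f g : T -> \bar R.

Lemma limf_einf_ge g (c : \bar R) :
  (\forall x \near F, c <= g x) -> c <= limf_einf g F.
Proof.
move=> cg; rewrite limf_einfE; apply: le_ereal_sup_tmp.
exists (ereal_inf (g @` [set x | c <= g x])); first by exists [set x | c <= g x].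
by apply/ereal_infP => _ [x + <-].
Qed.

Variable k : R.
Hypothesis k_gt0 : (0 < k)%R.

Lemma pmul_limf_einf_le f g :
  (forall c : R, (\forall x \near F, c%:E <= f x) ->
                 (\forall x \near F, (k * c)%:E <= g x)) ->
  k%:E * limf_einf f F <= limf_einf g F.
Proof.
move=> fg; rewrite -lee_pdivlMl // limf_einfE.
apply/ge_ereal_sup => _ [V FV <-].
have inf_le c : c%:E <= ereal_inf (f @` V) -> (k * c)%:E <= limf_einf g F.
  move=> /ereal_infP cV; apply/limf_einf_ge/fg.
  by apply: filterS FV => x Vx; apply: cV; exists x.
case: (ereal_inf (f @` V)) inf_le => [r| |] inf_le.
- by rewrite lee_pdivlMl // -EFinM; exact: inf_le.
- suff -> : limf_einf g F = +oo by rewrite gt0_muley // lte_fin invr_gt0.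
  apply: eq_infty => r; have := inf_le (r / k)%R (leey _).
  by rewrite mulrCA divff ?mulr1 // gt_eqF.
- by rewrite leNye.
Qed.

Lemma limf_esup_le_pmul f g :
  (forall c : R, (\forall x \near F, f x <= c%:E) ->
                 (\forall x \near F, g x <= (k * c)%:E)) ->
  limf_esup g F <= k%:E * limf_esup f F.
Proof.
move=> fg; rewrite -leeN2 -muleN -!limf_einfN.
apply: pmul_limf_einf_le => c cf.
have /fg : \forall x \near F, f x <= (- c)%:E.
  by apply: filterS cf => x; rewrite EFinN leeNr.
by apply: filterS => x; rewrite leeNr -EFinN -mulrN.
Qed.

End limf_pscale.

Section layer_cake.
Context d (T : measurableType d) (R : realType).
Variables (mu : {sigma_finite_measure set T -> \bar R}) (f : T -> R).
Hypotheses (mf : measurable_fun setT f) (f_ge0 : forall t, 0 <= f t).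

Let hypograph := [set p : T * R | 0 <= p.2 < f p.1].

Let measurable_hypograph : measurable hypograph.
Proof.
apply/measurable_set_bool/measurable_and; first exact: measurable_fun_ler.
by apply: measurable_fun_ltr => //; exact: measurableT_comp.
Qed.

Lemma measurable_fun_superlevel_measure :
  measurable_fun setT (fun y : R => mu [set t | 0 <= y < f t]).
Proof.
have := measurable_fun_ysection mu measurable_hypograph.
congr measurable_fun; apply/funext => y; congr (mu _).
by apply/seteqP; split => t; rewrite /ysection /= inE.
Qed.

Lemma ge0_integral_layer_cake :
  (\int[mu]_t (f t)%:E = \int[@lebesgue_measure R]_y mu [set t | (0 <= y < f t)%R])%E.
Proof.
have xsectionE t : @lebesgue_measure R (xsection hypograph t) = (f t)%:E.
  rewrite (_ : xsection _ _ = `[0, f t[%classic); last first.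
    by apply/seteqP; split => y; rewrite /xsection /= inE /= in_itv.
  rewrite lebesgue_measure_itv /= lte_fin.
  by case: ltgtP (f_ge0 t) => // [_ _|<- _]; rewrite ?sube0.
transitivity (\int[mu]_t \int[@lebesgue_measure R]_y (\1_hypograph (t, y))%:E)%E.
  apply: eq_integral => t _.
  rewrite -xsectionE -(setIT (xsection _ _)) -integral_indic //; last exact: measurable_xsection.
  by apply: eq_integral => y _; rewrite !indicE mem_xsection.
rewrite (@fubini_tonelli _ _ T (measurableTypeR R) R mu lebesgue_measure
  (fun p => (\1_hypograph p)%:E)) //=; last exact/measurable_EFinP/measurable_indic.
apply: eq_integral => y _; rewrite -(setIT [set t | _]) -integral_indic //.
apply/measurable_set_bool/measurable_and; first exact: measurable_cst.
exact: measurable_fun_ltr.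
Qed.

End layer_cake.

Lemma tilted_superlevel_ray (R : realType) (gam x y : R) : 0 <= gam ->
  let L := [set s : R | 0 <= y < expR (gam * s) * \1_[set s | x < s] s] in
  L = set0 \/ exists2 m, x <= m & L = [set s | m < s].
Proof.
move=> gam_ge0 L.
have [y_lt0|y_ge0] := ltP y 0.
  by left; apply/seteqP; split => s //= /andP[]; rewrite leNgt y_lt0.
have L_gt s : L s <-> x < s /\ y < expR (gam * s).
  rewrite /L /= y_ge0 indicE /=; have [xs|sx] := ltP x s.
    by rewrite mem_set // mulr1; split => // -[].
  by rewrite memNset ?mulr0 ?ltNge ?y_ge0; [split => // -[]|rewrite /= ltNge sx].
have [gam0|gam_neq0] := eqVneq gam 0.
  have [y_lt1|y_ge1] := ltP y 1.
    right; exists x => //; apply/seteqP; split => s; first by case/L_gt.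
    by move=> /= xs; apply/L_gt; rewrite gam0 mul0r expR0.
  by left; apply/seteqP; split => s // /L_gt[_]; rewrite gam0 mul0r expR0 ltNge y_ge1.
have gam_gt0 : 0 < gam by rewrite lt_neqAle eq_sym gam_neq0.
right; have [y0|y_neq0] := eqVneq y 0.
  exists x => //; apply/seteqP; split => s; first by case/L_gt.
  by move=> /= xs; apply/L_gt; rewrite y0 expR_gt0.
have y_gt0 : 0 < y by rewrite lt_neqAle eq_sym y_neq0.
exists (Num.max x (ln y / gam)); first by rewrite le_max lexx.
apply/seteqP; split => s; rewrite /= gt_max ltr_pdivrMr // mulrC.
  by move=> /L_gt[-> ys]; rewrite -ltr_expR lnK.
by move=> /andP[xs ys]; apply/L_gt; rewrite -ltr_expR lnK in ys.
Qed.

Definition tilted_tail d (T : measurableType d) (R : realType)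
    (mu : set T -> \bar R) (h : T -> R) (gam x : R) : \bar R :=
  (\int[mu]_(t in [set t | (x < h t)%R]) (expR (gam * h t))%:E)%E.

Section tilted_tail.
Context (R : realType) (gam : R).
Hypothesis gam_ge0 : 0 <= gam.

Lemma tilted_tailE d (T : measurableType d) (mu : {measure set T -> \bar R})
    (h : T -> R) x :
  tilted_tail mu h gam x = (\int[mu]_t (expR (gam * h t) * \1_[set t | x < h t] t)%:E)%E.
Proof. by rewrite /tilted_tail integral_mkcond epatch_indic. Qed.

Lemma tilted_tail_ge0 d (T : measurableType d) (mu : {measure set T -> \bar R})
    (h : T -> R) x : (0 <= tilted_tail mu h gam x)%E.
Proof. by apply: integral_ge0 => t _; rewrite lee_fin expR_ge0. Qed.

Lemma tilted_tail_ge d (T : measurableType d) (mu : {measure set T -> \bar R})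
    (h : T -> R) x : measurable_fun setT h ->
  ((expR (gam * x))%:E * mu [set t | (x < h t)%R] <= tilted_tail mu h gam x)%E.
Proof.
move=> mh; have mx : measurable [set t | x < h t].
  exact/measurable_set_bool/measurable_fun_ltr.
rewrite -integral_cst //; apply: ge0_le_integral => //.
- by move=> t _; rewrite lee_fin expR_ge0.
- apply/measurable_EFinP/measurable_funTS/measurableT_comp => //.
  exact: measurable_funM.
- by move=> t xh; rewrite lee_fin ler_expR ler_wpM2l // ltW.
Qed.

Lemma le_tilted_tail d1 d2 (T1 : measurableType d1) (T2 : measurableType d2)
    (mu1 : {sigma_finite_measure set T1 -> \bar R})
    (mu2 : {sigma_finite_measure set T2 -> \bar R})
    (h1 : T1 -> R) (h2 : T2 -> R) (x a b : R) :
  measurable_fun setT h1 -> measurable_fun setT h2 -> 0 <= a -> 0 <= b ->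
  (forall t, x <= t ->
     (a%:E * mu1 [set s | (t < h1 s)%R] <= b%:E * mu2 [set s | (t < h2 s)%R])%E) ->
  (a%:E * tilted_tail mu1 h1 gam x <= b%:E * tilted_tail mu2 h2 gam x)%E.
Proof.
move=> mh1 mh2 a_ge0 b_ge0 ab.
have mtilt (d' : measure_display) (T : measurableType d') (h : T -> R) :
    measurable_fun setT h ->
    measurable_fun setT (fun t => expR (gam * h t) * \1_[set t | x < h t] t).
  move=> mh; apply: measurable_funM; first exact/measurableT_comp/measurable_funM.
  exact/measurable_indic/measurable_set_bool/measurable_fun_ltr.
rewrite !tilted_tailE !ge0_integral_layer_cake //; try exact: mtilt.
have [m1 m2] := (measurable_fun_superlevel_measure mu1 (mtilt _ _ _ mh1),
                 measurable_fun_superlevel_measure mu2 (mtilt _ _ _ mh2)).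
rewrite -!ge0_integralZl_EFin //; apply: ge0_le_integral => //.
all: try by [move=> y _; rewrite mule_ge0 | exact: measurable_funeM].
move=> y _.
have preimageE (T : Type) (h : T -> R) :
    [set t | 0 <= y < expR (gam * h t) * \1_[set t | x < h t] t] =
    h @^-1` [set s | 0 <= y < expR (gam * s) * \1_[set s | x < s] s] := erefl.
rewrite (preimageE _ h1) (preimageE _ h2).
have [->|[m xm ->]] := tilted_superlevel_ray x y gam_ge0.
  by rewrite !preimage_set0 !measure0 !mule0.
exact: ab.
Qed.
End tilted_tail.

Section integral_density.
Local Open Scope ereal_scope.
Context d (T : measurableType d) (R : realType).
Variables (nu : {finite_measure set T -> \bar R})
          (mu : {sigma_finite_measure set T -> \bar R}) (g : T -> \bar R).
Hypotheses (mg : measurable_fun setT g)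
           (nuE : forall A, measurable A -> nu A = \int[mu]_(x in A) g x).

Lemma ge0_integral_density (f : T -> \bar R) :
  (forall x, 0 <= f x) -> measurable_fun setT f ->
  \int[nu]_x f x = \int[mu]_x (f x * g x).
Proof.
move=> f_ge0 mf.
have nu_mu : nu `<< mu.
  apply/null_content_dominatesP => A mA muA0.
  by rewrite nuE // null_set_integral //; exact: measurable_funTS.
rewrite -(Radon_Nikodym_SigmaFinite.change_of_variables nu_mu) //.
have mRN := measurable_int _ (Radon_Nikodym_SigmaFinite.f_integrable nu_mu).
apply: ae_eq_integral => //; try exact: emeasurable_funM.
have : ae_eq mu setT (Radon_Nikodym_SigmaFinite.f nu mu) g.
  apply: integral_ae_eq => //; first exact: Radon_Nikodym_SigmaFinite.f_integrable.
  by move=> A _ mA; rewrite -Radon_Nikodym_SigmaFinite.f_integral // nuE.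
by apply: filterS => x RNg /RNg /= ->.
Qed.

End integral_density.

Section exponential_tilting.
Context (R : realType) (F G : probability (measurableTypeR R) R) (gam k : R).
Hypothesis k_ge0 : 0 <= k.
Hypothesis GE : forall A : set R, measurable A ->
  G A = ((\int[F]_(u in A) (expR (gam * u))%:E) * k%:E)%E.

Let density u := (expR (gam * u) * k)%:E.

Let measurable_density : measurable_fun setT density.
Proof.
apply/measurable_EFinP/measurable_funM => //.
exact/measurableT_comp/measurable_funM.
Qed.

Let density_ge0 u : (0 <= density u)%E.
Proof. by rewrite lee_fin mulr_ge0 ?expR_ge0. Qed.

Let GE_density A : measurable A -> G A = (\int[F]_(u in A) density u)%E.
Proof.
move=> mA; rewrite GE // /density; under [RHS]eq_integral do rewrite EFinM.
rewrite ge0_integralZr //.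
exact/measurable_funTS/measurable_EFinP/measurableT_comp/measurable_funM.
Qed.

Lemma tail_tilt x : tail G x = (k%:E * tilted_tail F id gam x)%E.
Proof. by rewrite /tail GE // muleC set_itvoy. Qed.

Lemma conv_tail_tilt x : conv_tail G G x =
  ((k ^+ 2)%:E * tilted_tail (F \x F) (fun p => (p.1 + p.2)%R) gam x)%E.
Proof.
set S := [set p : measurableTypeR R * measurableTypeR R | x < p.1 + p.2].
have mS : measurable S.
  by apply/measurable_set_bool/measurable_fun_ltr => //; exact: measurable_funD.
have mSdensity : measurable_fun setT
    (fun p : measurableTypeR R * measurableTypeR R => (\1_S p)%:E * density p.2)%E.
  apply: emeasurable_funM; first exact/measurable_EFinP/measurable_indic.
  exact: measurableT_comp.
have Sdensity_ge0 p : (0 <= (\1_S p)%:E * density p.2)%E by rewrite mule_ge0 // lee_fin.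
rewrite -[LHS]/(\int[G]_u G (xsection S u))%E.
transitivity (\int[G]_u \int[F]_v ((\1_S (u, v))%:E * density v))%E.
  apply: eq_integral => u _; rewrite GE_density; last exact: measurable_xsection.
  rewrite integral_mkcond; apply: eq_integral => v _.
  by rewrite epatch_indic /= muleC !indicE mem_xsection.
rewrite (@ge0_integral_density _ _ _ G F density measurable_density GE_density); last 2 first.
- by move=> u; apply: integral_ge0 => v _; exact: (Sdensity_ge0 (u, v)).
- exact: (measurable_fun_fubini_tonelli_F (m2 := F) _ mSdensity Sdensity_ge0).
transitivity (\int[F \x F]_p ((\1_S p)%:E * density p.2 * density p.1))%E.
  rewrite fubini_tonelli1; last 2 first.
  - exact/emeasurable_funM/measurableT_comp.
  - by move=> p; rewrite mule_ge0.
  apply: eq_integral => u _; rewrite /fubini_F /= ge0_integralZr //.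
  exact: measurableT_comp mSdensity (pair1_measurable u).
rewrite tilted_tailE -ge0_integralZl_EFin ?exprn_ge0 //; last first.
  apply/measurable_EFinP/measurable_funM; last exact: measurable_indic mS.
  by apply/measurableT_comp/measurable_funM => //; exact: measurable_funD.
apply: eq_integral => p _; rewrite /density -!EFinM mulrDr expRD; congr EFin.
ring.
Qed.

End exponential_tilting.

Section tilted_ratio.
Context (R : realType) (F G : probability (measurableTypeR R) R) (gamma : R).
Hypotheses (F_tail_gt0 : forall x, (0 < tail F x)%E) (gamma_ge0 : 0 <= gamma).
Let k := (fine (mgf F gamma))^-1.
Hypothesis GE : forall A : set R, measurable A ->
  G A = ((\int[F]_(u in A) (expR (gamma * u))%:E) * k%:E)%E.

Let JF := tilted_tail F id gamma.
Let JH := tilted_tail (F \x F)%E (fun p => p.1 + p.2) gamma.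

Let mgt t : measurable [set s : measurableTypeR R | t < s].
Proof. by rewrite -set_itvoy; exact: measurable_itv. Qed.

Let mid : measurable_fun setT (@id (measurableTypeR R)).
Proof. exact: measurable_id. Qed.

Let msum : measurable_fun setT (fun p : measurableTypeR R * measurableTypeR R => p.1 + p.2).
Proof. exact: measurable_funD. Qed.

Let mgt_sum t : measurable [set p : measurableTypeR R * measurableTypeR R | t < p.1 + p.2].
Proof. exact/measurable_set_bool/measurable_fun_ltr. Qed.

Lemma tilting_constant_gt0 : 0 < k.
Proof.
have k_ge0 : 0 <= k.
  by rewrite invr_ge0 fine_ge0 // integral_ge0 // => u _; rewrite lee_fin expR_ge0.
(* With an infinite [mgf F gamma], [fine] returns 0 and [GE] would make [G] null. *)
rewrite lt_neqAle k_ge0 andbT eq_sym; apply/negP => /eqP k0.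
by have := GE measurableT; rewrite probability_setT -/k k0 mule0 => /eqP; rewrite eqe oner_eq0.
Qed.
Let k_gt0 := tilting_constant_gt0.

Let JF_fin x : JF x \is a fin_num.
Proof. by rewrite -(fin_num_pmulE _ k_gt0) -(tail_tilt GE) probability_fin_num. Qed.

Let JH_fin x : JH x \is a fin_num.
Proof.
rewrite -(fin_num_pmulE _ (exprn_gt0 2 k_gt0)) -(conv_tail_tilt (ltW k_gt0) GE).
exact: probability_fin_num.
Qed.

Let conv_ratio_G x : conv_ratio G x = (k * (fine (JH x) / fine (JF x)))%:E.
Proof.
rewrite /conv_ratio (conv_tail_tilt (ltW k_gt0) GE) (tail_tilt GE) -/(JF x) -/(JH x).
rewrite !fineM //=; congr EFin.
have [->|JF_neq0] := eqVneq (fine (JF x)) 0; first by rewrite !(mulr0, invr0).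
by field; rewrite JF_neq0 gt_eqF.
Qed.

Let tail_gt0 t : (0 < F [set s | (t < s)%R])%E.
Proof. by have := F_tail_gt0 t; rewrite /tail set_itvoy. Qed.

Let fine_tail_gt0 t : 0 < fine (F [set s | t < s]).
Proof.
by apply: fine_gt0; rewrite tail_gt0 -ge0_fin_numE ?(probability_fin_num F (mgt t)).
Qed.

Let fine_JF_gt0 x : 0 < fine (JF x).
Proof.
rewrite -lte_fin fineK //; apply: (lt_le_trans _ (tilted_tail_ge gamma_ge0 F x mid)).
by rewrite mule_gt0 ?lte_fin ?expR_gt0 //; exact: tail_gt0.
Qed.

Let conv_ratio_F t :
  conv_ratio F t = (fine ((F \x F)%E [set p | t < p.1 + p.2]) / fine (F [set s | t < s]))%:E.
Proof. by rewrite /conv_ratio /tail set_itvoy. Qed.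

Lemma conv_ratio_tilt_ge (c : R) :
  (\forall t \near +oo, (c%:E <= conv_ratio F t)%E) ->
  \forall x \near +oo, ((k * c)%:E <= conv_ratio G x)%E.
Proof.
have [c_le0 _|c_gt0 [M [M_real cM]]] := leP c 0.
  apply: nearW => x; rewrite conv_ratio_G lee_fin (@le_trans _ _ 0) ?pmulr_rle0 //.
  by rewrite mulr_ge0 ?divr_ge0 ?fine_ge0 ?tilted_tail_ge0 ?ltW.
exists M; split => // x Mx.
have cF t : x <= t ->
    (c%:E * F [set s | (t < id s)%R] <= 1%:E * (F \x F)%E [set p | (t < p.1 + p.2)%R])%E.
  move=> xt; have := cM t (lt_le_trans Mx xt).
  rewrite conv_ratio_F lee_fin ler_pdivlMr // => cFt.
  by rewrite lee_EFinM_fine ?probability_fin_num // mul1r.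
have := le_tilted_tail gamma_ge0 (mu1 := F) (mu2 := ((F \x F)%E : probability _ R))
  mid msum (ltW c_gt0) ler01 cF.
rewrite lee_EFinM_fine // mul1r => cJ.
by rewrite conv_ratio_G lee_fin ler_pM2l // ler_pdivlMr.
Qed.

Lemma conv_ratio_tilt_le (c : R) :
  (\forall t \near +oo, (conv_ratio F t <= c%:E)%E) ->
  \forall x \near +oo, (conv_ratio G x <= (k * c)%:E)%E.
Proof.
case=> M [M_real cM]; exists M; split => // x Mx.
have c_ge0 : 0 <= c.
  have := cM x Mx; rewrite conv_ratio_F lee_fin; apply: le_trans.
  by rewrite divr_ge0 ?fine_ge0 ?measure_ge0.
have Fc t : x <= t ->
    (1%:E * (F \x F)%E [set p | (t < p.1 + p.2)%R] <= c%:E * F [set s | (t < id s)%R])%E.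
  move=> xt; have := cM t (lt_le_trans Mx xt).
  rewrite conv_ratio_F lee_fin ler_pdivrMr // => Fct.
  by rewrite lee_EFinM_fine ?probability_fin_num // mul1r.
have := le_tilted_tail gamma_ge0 (mu1 := ((F \x F)%E : probability _ R)) (mu2 := F)
  msum mid ler01 c_ge0 Fc.
rewrite lee_EFinM_fine // mul1r => Jc.
by rewrite conv_ratio_G lee_fin ler_pM2l // ler_pdivrMr.
Qed.

End tilted_ratio.

Theorem lemma8 (R : realType) (F G : probability (measurableTypeR R) R) (gamma : R) :
  F `]-oo, 0[%classic = 0%E ->
  (forall x : R, (0 < tail F x)%E) ->
  0 <= gamma ->
  (mgf F gamma < +oo)%E ->
  (forall A : set R, measurable A ->
     G A = ((\int[F]_(u in A) (expR (gamma * u))%:E) * ((fine (mgf F gamma))^-1)%:E)%E) ->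
  ((((fine (mgf F gamma))^-1)%:E * limf_einf (conv_ratio F) (+oo%R : set_system R))
     <= limf_einf (conv_ratio G) (+oo%R : set_system R))%E /\
  (limf_esup (conv_ratio G) (+oo%R : set_system R)
     <= ((fine (mgf F gamma))^-1)%:E * limf_esup (conv_ratio F) (+oo%R : set_system R))%E.
Proof.
move=> _ F_tail_gt0 gamma_ge0 _ GE.
have k_gt0 := tilting_constant_gt0 GE.
split.
- apply: (pmul_limf_einf_le k_gt0).
  exact: conv_ratio_tilt_ge.
- apply: (limf_esup_le_pmul k_gt0).
  exact: conv_ratio_tilt_le.
Qed.
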